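(* Let $p$ be an integer with $1\le p\le13$. For $\eta\in\mathbf P^p([-1,1])$ with $\eta(-1)=0$, write $\eta=\sum_{m=1}^p\eta_m(L_m+L_{m-1})$ and define $$\Delta(\eta):=(2\eta(1)-3\eta_p)^2+p^2\Big(-4\|\eta\|^2_{L^2(-1,1)}+\frac{9\eta_p^2}{2p+1}\Big).$$ Then $\Delta(\eta)<0$ for every such $\eta$ that is not the null function.
   Context: $L_m$ are the Legendre polynomials: $L_0=1$, $L_1=x$, $(m+1)L_{m+1}=(2m+1)xL_m-mL_{m-1}$; $L_m(1)=1$, $L_m(-1)=(-1)^m$, so the polynomials $L_m+L_{m-1}$, $1\le m\le p$, form a basis of $\{\eta\in\mathbf P^p([-1,1]):\eta(-1)=0\}$ and the coefficients $\eta_m$ are uniquely determined. $\mathbf P^p([-1,1])$ is the space of real polynomials of degree at most $p$. *)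

From HB Require Import structures.
From mathcomp Require Import all_boot all_order all_algebra.
From mathcomp Require Import all_classical all_reals all_analysis.
Set Implicit Arguments. Unset Strict Implicit. Unset Printing Implicit Defensive.
Import Order.TTheory GRing.Theory Num.Theory.
Local Open Scope ring_scope.

(* legendre_pair n = (L_n, L_{n+1}) via the three-term recurrence
   (m+1) L_{m+1} = (2m+1) x L_m - m L_{m-1}. *)
Fixpoint legendre_pair (R : realType) (n : nat) : {poly R} * {poly R} :=
  match n with
  | 0%N => (1, 'X)
  | n'.+1 =>
      let: (a, b) := legendre_pair R n' in
      (b, (n'.+2)%:R^-1 *: ((2 * n'.+1 + 1)%:R *: ('X * b) - (n'.+1)%:R *: a))
  end.

Definition legendre (R : realType) (n : nat) : {poly R} := (legendre_pair R n).1.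

Definition L2sq (R : realType) (eta : {poly R}) : R :=
  Rintegral (@lebesgue_measure R) `[(-1)%R, 1%R]%classic (fun x => (eta.[x]) ^+ 2).

(* Delta(eta), where etap is the coefficient eta_p *)
Definition Delta (R : realType) (p : nat) (eta : {poly R}) (etap : R) : R :=
  (2 * eta.[1] - 3 * etap) ^+ 2
  + (p%:R) ^+ 2 * (- 4 * L2sq eta + 9 * etap ^+ 2 / (2 * p + 1)%:R).

From HB Require Import structures.
From mathcomp Require Import all_boot all_order all_algebra.
From mathcomp Require Import all_classical all_reals all_analysis.
From mathcomp Require Import ring lra zify.
Import Order.TTheory GRing.Theory Num.Theory.
Import numFieldNormedType.Exports.
Local Open Scope ring_scope.

(* Write [eta = \sum_(k <= p) a_k L_k].  Since [L_k(1) = 1], [L_k(-1) = (-1)^k] and the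
   [L_k] are orthogonal with [||L_k||^2 = 2 / (2k + 1)], Delta equals
   [(2 S - a_p)^2 + p^2 a_p^2 / (2p + 1) - 8 p^2 N] with [S = \sum_(k < p) a_k] and
   [N = \sum_(k < p) a_k^2 / (2k + 1)], while [eta(-1) = 0] reads
   [\sum_(k < p) a_k (-1)^(p + k) = - a_p].  Cauchy-Schwarz with the weights [2k + 1]
   against [al + ga (-1)^(p + k)] bounds [N] from below by a concave quadratic in
   [(al, ga)]; evaluating it at a well-chosen point reduces [Delta < 0] to the positive
   definiteness of a binary quadratic form, which holds iff
   [-p^3 + 12 p^2 + 21 p + 8 > 0], i.e. for [p <= 13].  Orthogonality itself follows
   from Bonnet's recursion, which determines [\int L_m L_k] from [\int L_k]. *)

Arguments legendre : simpl never.

Section RealAlgebra.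
Variable R : realFieldType.

Lemma sum_sqr_div_ge {I : finType} (a u w : I -> R) : (forall i, 0 < w i) ->
  \sum_i (2 * a i * u i - w i * u i ^+ 2) <= \sum_i a i ^+ 2 / w i.
Proof.
move=> w_gt0; apply: ler_sum => i _.
have wi_neq0 : w i != 0 by rewrite gt_eqF.
have : 0 <= (a i - w i * u i) ^+ 2 / w i by rewrite divr_ge0 ?sqr_ge0 ?ltW.
suff -> : (a i - w i * u i) ^+ 2 / w i
        = a i ^+ 2 / w i - (2 * a i * u i - w i * u i ^+ 2) by rewrite subr_ge0.
by field.
Qed.

Lemma sum_odd p : \sum_(k < p) (2 * k + 1)%:R = p%:R ^+ 2 :> R.
Proof.
elim: p => [|p IHp]; first by rewrite big_ord0 expr0n.
by rewrite big_ord_recr /= IHp; ring.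
Qed.

Lemma sum_odd_sign p : \sum_(k < p) (2 * k + 1)%:R * (-1) ^+ (p + k) = - p%:R :> R.
Proof.
elim: p => [|p IHp]; first by rewrite big_ord0 oppr0.
rewrite big_ord_recr /= addSn exprS addnn -mul2n mulnC exprM sqrr_sign mulr1.
under eq_bigr do rewrite addSn exprS mulN1r mulrN.
by rewrite sumrN IHp; ring.
Qed.

Lemma sum_sqr_div_odd_ge p (a : nat -> R) :
  \sum_(k < p.+1) a k * (-1) ^+ k = 0 ->
  forall al ga : R,
    2 * al * (\sum_(k < p) a k) - 2 * ga * a p
      - (p%:R ^+ 2 * al ^+ 2 - 2 * p%:R * al * ga + p%:R ^+ 2 * ga ^+ 2)
    <= \sum_(k < p) a k ^+ 2 / (2 * k + 1)%:R.
Proof.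
move=> alt0 al ga.
have alt_p : \sum_(k < p) a k * (-1) ^+ (p + k) = - a p.
  move: alt0; rewrite big_ord_recr /= => /eqP; rewrite addr_eq0 => /eqP alt.
  under eq_bigr do rewrite exprD mulrCA.
  by rewrite -mulr_sumr alt mulrN mulrCA -expr2 sqrr_sign mulr1.
have w_gt0 (k : 'I_p) : 0 < (2 * k + 1)%:R :> R by rewrite ltr0n addn1.
have := sum_sqr_div_ge (fun k : 'I_p => a k)
  (fun k => al + ga * (-1) ^+ (p + k)) (fun k => (2 * k + 1)%:R) w_gt0.
have term (x s w : R) : s ^+ 2 = 1 ->
    2 * x * (al + ga * s) - w * (al + ga * s) ^+ 2
    = 2 * al * x + 2 * ga * (x * s) - (al ^+ 2 * w + 2 * al * ga * (w * s) + ga ^+ 2 * w).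
  move=> s2; apply: subr0_eq.
  by transitivity (ga ^+ 2 * w * (1 - s ^+ 2)); [ring | rewrite s2 subrr mulr0].
rewrite (eq_bigr _ (fun (k : 'I_p) _ => term _ _ _ (sqrr_sign R (p + k)))).
by rewrite sumrB !big_split /= -!mulr_sumr sum_odd sum_odd_sign alt_p; lra.
Qed.

(* Positive definiteness of this form in [(A, B)] is where [P <= 13] is needed: its
   discriminant has the sign of [-P^3 + 12 P^2 + 21 P + 8]. *)
Lemma gap_form_gt0 {P A B : R} : 1 <= P -> P <= 13 -> (A != 0) || (B != 0) ->
  4 * P ^+ 2 * A ^+ 2 - 4 * P * A * (A - P ^+ 2 / (2 * P + 1) * B)
    + P ^+ 2 * (A - P ^+ 2 / (2 * P + 1) * B) ^+ 2
  < 8 * P ^+ 2 * (A ^+ 2 + P ^+ 2 / (2 * P + 1) * B ^+ 2).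
Proof.
move=> P_ge1 P_le13 AB_neq0; set beta := P ^+ 2 / (2 * P + 1).
have P_gt0 : 0 < P by lra.
have den_gt0 : 0 < 2 * P + 1 by lra.
have beta_gt0 : 0 < beta by rewrite divr_gt0 // exprn_gt0 //; lra.
have cubic_gt0 : 0 < - P ^+ 3 + 12 * P ^+ 2 + 21 * P + 8.
  have : 0 <= P ^+ 2 * (13 - P) by rewrite mulr_ge0 ?sqr_ge0 ?subr_ge0.
  have : 0 <= P * (21 - P) by rewrite mulr_ge0 //; lra.
  have -> : - P ^+ 3 + 12 * P ^+ 2 + 21 * P + 8 = P ^+ 2 * (13 - P) + P * (21 - P) + 8 by ring.
  lra.
set c1 := 3 * P ^+ 2 + 4 * P.
have c1_gt0 : 0 < c1 by rewrite /c1; nra.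
set X := c1 * A + (P ^+ 2 * beta - 2 * P * beta) * B.
set K := 4 * beta * P ^+ 3 * (- P ^+ 3 + 12 * P ^+ 2 + 21 * P + 8) / (2 * P + 1).
have K_gt0 : 0 < K.
  by rewrite /K !mulr_gt0 ?invr_gt0 ?exprn_gt0.
rewrite -subr_gt0 -(pmulr_rgt0 _ c1_gt0).
have -> : c1 * (8 * P ^+ 2 * (A ^+ 2 + beta * B ^+ 2) -
    (4 * P ^+ 2 * A ^+ 2 - 4 * P * A * (A - beta * B) + P ^+ 2 * (A - beta * B) ^+ 2))
    = X ^+ 2 + K * B ^+ 2.
  by rewrite /X /K /c1 /beta; field; rewrite gt_eqF.
have [B0|B_neq0] := eqVneq B 0; last first.
  by rewrite ltr_wpDl ?sqr_ge0 // mulr_gt0 // exprn_even_gt0 //= B_neq0.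
move: AB_neq0; rewrite B0 eqxx orbF => A_neq0.
by rewrite /X B0 expr0n !mulr0 !addr0 exprn_even_gt0 //= mulf_neq0 // gt_eqF.
Qed.

Lemma quadratic_bound_lt (P S B N : R) : 1 <= P -> P <= 13 -> 0 < N ->
  (forall al ga : R,
     2 * al * S - 2 * ga * B - (P ^+ 2 * al ^+ 2 - 2 * P * al * ga + P ^+ 2 * ga ^+ 2) <= N) ->
  (2 * S - B) ^+ 2 + P ^+ 2 / (2 * P + 1) * B ^+ 2 < 8 * P ^+ 2 * N.
Proof.
move=> P_ge1 P_le13 N_gt0 bound.
have lam_gt0 : 0 < 8 * P ^+ 2 by rewrite mulr_gt0 // exprn_gt0 //; lra.
have [AB_neq0|] := boolP ((2 * S - B != 0) || (B != 0)); last first.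
  by rewrite negb_or !negbK => /andP[/eqP-> /eqP->]; rewrite expr0n mulr0 addr0 mulr_gt0.
have gap := gap_form_gt0 P_ge1 P_le13 AB_neq0.
set beta := P ^+ 2 / (2 * P + 1) in gap *; set A := 2 * S - B in gap *.
set F := A ^+ 2 + beta * B ^+ 2 in gap *; set lam := 8 * P ^+ 2 in gap lam_gt0 *.
set Q := 4 * P ^+ 2 * A ^+ 2 - _ + _ in gap.
(* Testing the bound along the ray [(al, ga) = t (2 A, A - beta B)]. *)
have ray t : 2 * t * F - t ^+ 2 * Q <= N.
  by have := bound (2 * A * t) ((A - beta * B) * t); rewrite /F /Q /A; congr (_ <= _); ring.
have : 2 * lam * F - Q <= lam ^+ 2 * N.
  have -> : 2 * lam * F - Q = lam ^+ 2 * (2 * lam^-1 * F - lam^-1 ^+ 2 * Q).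
    by field; rewrite gt_eqF.
  by rewrite ler_pM2l ?exprn_gt0.
rewrite -(ltr_pM2l lam_gt0) expr2 -mulrA; lra.
Qed.
End RealAlgebra.

Section Legendre.
Variable R : realType.
Local Notation L := (legendre R).

Lemma legendre0 : L 0 = 1. Proof. by []. Qed.
Lemma legendre1 : L 1 = 'X. Proof. by []. Qed.

Lemma legendre_pair_snd n : (legendre_pair R n).2 = L n.+1.
Proof. by rewrite /legendre /=; case: (legendre_pair R n). Qed.

Lemma legendre_rec n :
  n.+1%:R * L n.+1 = (2 * n + 1)%:R * ('X * L n) - n%:R * L n.-1.
Proof.
case: n => [|n]; first by rewrite legendre1 legendre0 !mul1r mul0r subr0 mulr1.
have -> : L n.+2 = n.+2%:R^-1 *: ((2 * n.+1 + 1)%:R *: ('X * L n.+1) - n.+1%:R *: L n).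
  rewrite /legendre /=; case E: (legendre_pair R n) => [a b] /=.
  by rewrite -[a]/((a, b).1) -[b]/((a, b).2) -E legendre_pair_snd.
by rewrite -!mul_polyC -!polyC_natr !mul_polyC scalerA mulfV ?scale1r // pnatr_eq0.
Qed.

Lemma horner_legendre_sign (e : R) n : e ^+ 2 = 1 -> (L n).[e] = e ^+ n.
Proof.
move=> e2; suff [] : (L n).[e] = e ^+ n /\ (L n.+1).[e] = e ^+ n.+1 by [].
elim: n => [|n [IHn IHn1]]; first by rewrite legendre0 legendre1 !hornerE.
split=> //; apply: (mulfI (_ : n.+2%:R != 0)); first by rewrite pnatr_eq0.
have := congr1 (horner^~ e) (legendre_rec n.+1).
rewrite [n.+1.-1]/= -!polyC_natr !(hornerD, hornerN, hornerCM, hornerM, hornerX) IHn IHn1 => ->.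
have en2 : e ^+ n.+2 = e ^+ n by rewrite -addn2 exprD e2 mulr1.
by rewrite -en2 [e ^+ n.+2]exprS; ring.
Qed.

Lemma horner_legendre1 n : (L n).[1] = 1.
Proof. by rewrite horner_legendre_sign ?expr1n. Qed.

Lemma horner_legendreN1 n : (L n).[-1] = (-1) ^+ n.
Proof. by rewrite horner_legendre_sign ?sqrrN ?expr1n. Qed.

Lemma natr_poly_neq0 n : (n.+1%:R : {poly R}) != 0.
Proof. by rewrite -polyC_natr polyC_eq0 pnatr_eq0. Qed.

Lemma deriv_legendre_rec n :
  n.+1%:R * (L n.+1)^`() = (2 * n + 1)%:R * (L n + 'X * (L n)^`()) - n%:R * (L n.-1)^`().
Proof.
have := congr1 (@deriv R) (legendre_rec n).
by rewrite -!polyC_natr derivB !deriv_mulC derivM derivX mul1r.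
Qed.

Lemma deriv_legendreSS_of n : 'X * (L n.+1)^`() = (L n)^`() + n.+1%:R * L n.+1 ->
  (L n.+2)^`() = (L n)^`() + (2 * n + 3)%:R * L n.+1.
Proof.
move=> J1; apply: (mulfI (natr_poly_neq0 n.+1)).
by rewrite deriv_legendre_rec J1; ring.
Qed.

Lemma deriv_legendre_id n :
  'X * (L n.+1)^`() = (L n)^`() + n.+1%:R * L n.+1 /\
  (L n.+1)^`() = 'X * (L n)^`() + n.+1%:R * L n.
Proof.
elim: n => [|n [J1 J2]].
  by rewrite legendre0 legendre1 derivX -polyC1 derivC polyC1 !mulr1 !mulr0 !mul1r !add0r.
have I1 := deriv_legendreSS_of n J1.
by rewrite I1 legendre_rec; split; [rewrite J2 | rewrite J1]; ring.
Qed.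

Lemma deriv_legendreSS n : (L n.+2)^`() = (L n)^`() + (2 * n + 3)%:R * L n.+1.
Proof. exact: deriv_legendreSS_of (deriv_legendre_id n).1. Qed.
End Legendre.

Section PolyIntegral.
Variable R : realType.

(* The antiderivative vanishing at [0]; for [i = 0] the coefficient is [q`_0 / 0 = 0]. *)
Definition poly_prim (q : {poly R}) : {poly R} :=
  \poly_(i < (size q).+1) (q`_i.-1 / i%:R).

Lemma coef_poly_prim q i : (poly_prim q)`_i = q`_i.-1 / i%:R.
Proof.
rewrite coef_poly; case: ltnP => // q_le_i.
by rewrite nth_default ?mul0r //; case: i q_le_i.
Qed.

Lemma deriv_poly_prim q : (poly_prim q)^`() = q.
Proof.
apply/polyP => i.
by rewrite coef_deriv coef_poly_prim -[LHS]mulr_natr divfK ?pnatr_eq0.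
Qed.

Definition poly_integral (q : {poly R}) : R := (poly_prim q).[1] - (poly_prim q).[-1].

Fact poly_integral_is_nmod_morphism : nmod_morphism poly_integral.
Proof.
have prim0 : poly_prim 0 = 0 by apply/polyP => i; rewrite coef_poly_prim !coef0 mul0r.
have primD p q : poly_prim (p + q) = poly_prim p + poly_prim q.
  by apply/polyP => i; rewrite coefD !coef_poly_prim coefD mulrDl.
split=> [|p q]; rewrite /poly_integral ?prim0 ?primD; first by rewrite !horner0 subrr.
by rewrite !hornerD addrACA opprD.
Qed.

Fact poly_integral_is_scalable : scalable_for *%R poly_integral.
Proof.
move=> a q; rewrite /poly_integral.
have -> : poly_prim (a *: q) = a *: poly_prim q.
  by apply/polyP => i; rewrite coefZ !coef_poly_prim coefZ mulrA.
by rewrite !hornerZ mulrBr.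
Qed.

HB.instance Definition _ := GRing.isNmodMorphism.Build {poly R} R poly_integral
  poly_integral_is_nmod_morphism.
HB.instance Definition _ := GRing.isScalable.Build R {poly R} R *%R poly_integral
  poly_integral_is_scalable.

Lemma poly_integral_deriv q : poly_integral q^`() = q.[1] - q.[-1].
Proof.
rewrite /poly_integral; have -> : poly_prim q^`() = q - (q`_0)%:P.
  apply/polyP => -[|i]; rewrite coef_poly_prim coefB coefC /=.
    by rewrite invr0 mulr0 subrr.
  by rewrite coef_deriv subr0 -[_ *+ _]mulr_natr mulfK ?pnatr_eq0.
by rewrite !hornerD !hornerN !hornerC opprB addrA subrK.
Qed.

Lemma poly_integral1 : poly_integral 1 = 2.
Proof. by rewrite -(derivX R) poly_integral_deriv !hornerX opprK. Qed.

Lemma poly_integral_natrM n q : poly_integral (n%:R * q) = n%:R * poly_integral q.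
Proof. by rewrite !mulr_natl raddfMn. Qed.

Lemma Rintegral_horner q :
  Rintegral (@lebesgue_measure R) `[(-1)%R, 1%R]%classic (horner q) = poly_integral q.
Proof.
rewrite /Rintegral (@continuous_FTC2 _ _ (horner (poly_prim q))).
- by rewrite -EFinD.
- lra.
- exact/continuous_subspaceT/continuous_horner.
- split=> [x _| |].
  + exact: derivable_horner.
  + exact/cvg_at_right_filter/continuous_horner.
  + exact/cvg_at_left_filter/continuous_horner.
- by move=> x _; rewrite -derivE deriv_poly_prim.
Qed.

Lemma L2sqE q : L2sq q = poly_integral (q ^+ 2).
Proof.
rewrite /L2sq -Rintegral_horner; congr Rintegral; apply/funext => x.
by rewrite horner_exp.
Qed.
End PolyIntegral.

Arguments poly_integral {R} : simpl never.

Section Orthogonality.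
Variable R : realType.
Local Notation L := (legendre R).

Lemma poly_integral_legendreS n : poly_integral (L n.+1) = 0.
Proof.
have := congr1 poly_integral (deriv_legendreSS R n).
rewrite raddfD /= poly_integral_natrM !poly_integral_deriv.
rewrite !horner_legendre1 !horner_legendreN1 -addn2 exprD sqrrN expr1n mulr1.
rewrite -{1}[_ - _]addr0 => /addrI/esym/eqP.
by rewrite mulf_eq0 pnatr_eq0 addn3 => /eqP.
Qed.

Definition legendre_gram (m k : nat) : R := if m == k then 2 / (2 * m + 1)%:R else 0.

Lemma legendre_gram_diag m : legendre_gram m m = 2 / (2 * m + 1)%:R.
Proof. by rewrite /legendre_gram eqxx. Qed.

Lemma legendre_gram_off m k : m != k -> legendre_gram m k = 0.
Proof. by rewrite /legendre_gram => /negbTE->. Qed.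

(* Bonnet's recursion applied in both indices of [(m, k) |-> \int L_m L_k]. *)
Definition bonnet_rec (f : nat -> nat -> R) := forall m k,
  m.+1%:R * (2 * k + 1)%:R * f m.+1 k =
  (2 * m + 1)%:R * (k.+1%:R * f m k.+1 + k%:R * f m k.-1) - (2 * k + 1)%:R * m%:R * f m.-1 k.

Lemma bonnet_rec_uniq {f g : nat -> nat -> R} :
  bonnet_rec f -> bonnet_rec g -> f 0 =1 g 0 -> forall m k, f m k = g m k.
Proof.
move=> Bf Bg fg0 m; suff [] : f m =1 g m /\ f m.+1 =1 g m.+1 by [].
have nz j k : j.+1%:R * (2 * k + 1)%:R != 0 :> R by rewrite -natrM pnatr_eq0 muln_eq0 addn1.
elim: m => [|m [IHm IHm1]].
  by split=> // k; apply: (mulfI (nz 0%N k)); rewrite Bf Bg !fg0.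
by split=> // k; apply: (mulfI (nz m.+1 k)); rewrite Bf Bg !IHm1 [m.+1.-1]/= IHm.
Qed.

Lemma bonnet_rec_gram : bonnet_rec legendre_gram.
Proof.
move=> m k.
have [->|k_neq] := eqVneq k m.+1.
  rewrite /= !legendre_gram_diag !legendre_gram_off; try lia.
  by field; rewrite !gt_eqF //; have := ler0n R m; lra.
have [->|m_neq] := eqVneq m k.+1.
  rewrite /= !legendre_gram_diag !legendre_gram_off; try lia.
  by field; rewrite !gt_eqF //; have := ler0n R k; lra.
have -> : k%:R * legendre_gram m k.-1 = 0.
  by case: k k_neq m_neq => [|k] *; rewrite ?mul0r // legendre_gram_off ?mulr0 //; lia.
have -> : (2 * k + 1)%:R * m%:R * legendre_gram m.-1 k = 0.
  by case: m k_neq m_neq => [|m] *; rewrite ?mulr0 ?mul0r // legendre_gram_off ?mulr0 //; lia.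
rewrite (legendre_gram_off _ _ m_neq) legendre_gram_off 1?eq_sym //.
by rewrite !(mulr0, addr0, subr0).
Qed.

Lemma legendre_prod_rec m k :
  m.+1%:R * (2 * k + 1)%:R * (L m.+1 * L k) =
  (2 * m + 1)%:R * (k.+1%:R * (L m * L k.+1) + k%:R * (L m * L k.-1))
  - (2 * k + 1)%:R * m%:R * (L m.-1 * L k).
Proof.
have -> : k.+1%:R * (L m * L k.+1) + k%:R * (L m * L k.-1) =
          L m * (k.+1%:R * L k.+1 + k%:R * L k.-1) by ring.
have -> : m.+1%:R * (2 * k + 1)%:R * (L m.+1 * L k) =
          (2 * k + 1)%:R * L k * (m.+1%:R * L m.+1) by ring.
by rewrite !legendre_rec; ring.
Qed.

Lemma bonnet_rec_integral : bonnet_rec (fun m k => poly_integral (L m * L k)).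
Proof.
move=> m k; have := congr1 poly_integral (legendre_prod_rec m k).
rewrite -!mulrA (raddfB poly_integral) /= !poly_integral_natrM.
by rewrite (raddfD poly_integral) /= !poly_integral_natrM.
Qed.

Lemma legendre_orthogonal m k : poly_integral (L m * L k) = legendre_gram m k.
Proof.
have := bonnet_rec_uniq bonnet_rec_integral bonnet_rec_gram; apply=> -[|j].
  by rewrite legendre0 mulr1 poly_integral1 legendre_gram_diag divr1.
by rewrite legendre0 mul1r poly_integral_legendreS legendre_gram_off.
Qed.
End Orthogonality.

Section Expansion.
Variable R : realType.
Local Notation L := (legendre R).

Definition legendre_coef (c : nat -> R) (p k : nat) : R :=
  (if k == 0%N then 0 else c k) + (if (k < p)%N then c k.+1 else 0).

Lemma sum_legendre_pairs (c : nat -> R) p :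
  \sum_(1 <= m < p.+1) c m *: (L m + L m.-1) = \sum_(k < p.+1) legendre_coef c p k *: L k.
Proof.
under eq_bigr do rewrite scalerDr; under [RHS]eq_bigr do rewrite scalerDl.
rewrite !big_split /= !big_add1 /= !big_mkord; congr (_ + _).
  by rewrite big_ord_recl /= scale0r add0r.
by rewrite big_ord_recr /= ltnn scale0r addr0; apply: eq_bigr => k _; rewrite ltn_ord.
Qed.

Lemma horner_legendre_sum (a : nat -> R) n e : e ^+ 2 = 1 ->
  (\sum_(k < n) a k *: L k).[e] = \sum_(k < n) a k * e ^+ k.
Proof.
by move=> e2; rewrite horner_sum; apply: eq_bigr => k _; rewrite hornerZ horner_legendre_sign.
Qed.

Lemma L2sq_legendre_sum (a : nat -> R) n :
  L2sq (\sum_(k < n) a k *: L k) = \sum_(k < n) a k ^+ 2 * (2 / (2 * k + 1)%:R).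
Proof.
rewrite L2sqE expr2 mulr_suml raddf_sum /=; apply: eq_bigr => i _.
rewrite mulr_sumr raddf_sum /= (bigD1 i) //= big1 => [|j j_neq_i].
  rewrite addr0 -scalerAl -scalerAr !linearZ /= legendre_orthogonal.
  by rewrite legendre_gram_diag mulrA -expr2.
by rewrite -scalerAl -scalerAr !linearZ /= legendre_orthogonal legendre_gram_off ?mulr0 // eq_sym.
Qed.
Lemma Delta_legendre_sum p (a : nat -> R) :
  Delta p (\sum_(k < p.+1) a k *: L k) (a p) =
  (2 * (\sum_(k < p) a k) - a p) ^+ 2 + p%:R ^+ 2 / (2 * p%:R + 1) * a p ^+ 2
  - 8 * p%:R ^+ 2 * (\sum_(k < p) a k ^+ 2 / (2 * k + 1)%:R).
Proof.
rewrite /Delta L2sq_legendre_sum horner_legendre_sum ?expr1n //.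
under eq_bigr do rewrite expr1n mulr1.
under [X in _ * (_ * X + _)]eq_bigr do rewrite mulrCA.
rewrite !big_ord_recr /= -mulr_sumr natrD natrM.
by field; rewrite gt_eqF // ltr_wpDl ?mulr_ge0.
Qed.

Lemma legendre_sum_energy_gt0 p (a : nat -> R) :
  \sum_(k < p.+1) a k * (-1) ^+ k = 0 -> \sum_(k < p.+1) a k *: L k != 0 ->
  0 < \sum_(k < p) a k ^+ 2 / (2 * k + 1)%:R.
Proof.
move=> alt0 eta_neq0.
have term_ge0 (k : 'I_p) : true -> 0 <= a k ^+ 2 / (2 * k + 1)%:R.
  by rewrite divr_ge0 ?sqr_ge0.
rewrite lt0r sumr_ge0 // andbT; apply: contra_neq eta_neq0 => /(psumr_eq0P term_ge0) a0.
have ak0 (k : 'I_p) : a k = 0.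
  by have /eqP := a0 k isT; rewrite mulf_eq0 invr_eq0 pnatr_eq0 addn1 orbF sqrf_eq0 => /eqP.
move: alt0; rewrite !big_ord_recr /= !big1 => [|k _|k _]; rewrite ?ak0 ?mul0r ?scale0r //.
by rewrite !add0r => /eqP; rewrite mulf_eq0 signr_eq0 orbF => /eqP->; rewrite scale0r.
Qed.
End Expansion.

Arguments legendre_coef {R}.

Theorem lemma10 (R : realType) (p : nat) (hp1 : (1 <= p)%N) (hp2 : (p <= 13)%N)
  (eta : {poly R}) (c : nat -> R) :
  (size eta <= p.+1)%N ->
  eta.[-1] = 0 ->
  eta = \sum_(1 <= m < p.+1) c m *: (legendre R m + legendre R m.-1) ->
  eta != 0 ->
  Delta p eta (c p) < 0.
Proof.
(* The degree bound is implied by the expansion of [eta]. *)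
move=> _ eta_m1 eta_def eta_neq0.
rewrite {}eta_def sum_legendre_pairs in eta_m1 eta_neq0 *.
set a := legendre_coef c p in eta_m1 eta_neq0 *.
have -> : c p = a p by rewrite /a /legendre_coef ltnn addr0 ifN // -lt0n.
rewrite horner_legendre_sum ?sqrrN ?expr1n // in eta_m1.
rewrite Delta_legendre_sum subr_lt0 quadratic_bound_lt ?ler1n ?ler_nat //.
- exact: legendre_sum_energy_gt0.
- exact: sum_sqr_div_odd_ge.
Qed.
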